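(* Let $G>0$, $T>0$, let $F\colon\mathbb R\to\mathbb R$ be continuous and $T$-periodic, and let $a\in(0,1)$ be such that $\mathbb R\times\Gamma_a$ is a bound set for $v_\lambda$ for every $\lambda\in[0,1]$. Then there exists $b>0$ such that $\mathbb R\times(\Gamma_a\cap\Delta_b)$ is a bound set for $v_\lambda$ for all $\lambda\in[0,1]$.
   Context: For $\lambda\in[0,1]$ consider on $\mathbb R\times\Omega$, $\Omega=(-1,1)\times\mathbb R$, the system $\dot t=1$, $\dot x=p$, $\dot p=\big(G\sqrt{1-x^2}-\frac{p^2}{1-x^2}\big)x-\lambda(1-x^2)F(t)$, with right-hand side $v_\lambda(t,x,p)$ and local flow $\phi^\lambda$ (solutions are unique). For $0<a<1$ and $b>0$, $\Gamma_a=\{(x,p)\in\mathbb R^2:|x|\le a\}$ and $\Delta_b=\{(x,p)\in\mathbb R^2:|x|<1,\ b|x|+|p|\le b\}$. A closed set $E\subset\mathbb R\times\Omega$ is a bound set for $v_\lambda$ if for every $\epsilon>0$ there is no point $z\in\partial E$ with $\phi^\lambda_s(z)\in E$ for all $s\in(-\epsilon,\epsilon)$. *)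

From Stdlib Require Import Reals.
From Coquelicot Require Import Coquelicot.
Open Scope R_scope.

Definition pt := (R * R * R)%type.
Definition pt_t (z : pt) : R := fst (fst z).
Definition pt_x (z : pt) : R := snd (fst z).
Definition pt_p (z : pt) : R := snd z.

(* The phase space R x Omega, Omega = (-1,1) x R. *)
Definition inD (z : pt) : Prop := -1 < pt_x z < 1.

(* Max-norm distance on R^3 (induces the usual topology). *)
Definition dist3 (z w : pt) : R :=
  Rmax (Rabs (pt_t z - pt_t w)) (Rmax (Rabs (pt_x z - pt_x w)) (Rabs (pt_p z - pt_p w))).

(* Third component of v_lambda (first two are 1 and p). *)
Definition vp (G : R) (F : R -> R) (lam t x p : R) : R :=
  (G * sqrt (1 - x ^ 2) - p ^ 2 / (1 - x ^ 2)) * x - lam * (1 - x ^ 2) * F t.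

Definition is_solution (G : R) (F : R -> R) (lam eps : R) (u : R -> pt) : Prop :=
  forall s, -eps < s < eps ->
    inD (u s) /\
    is_derive (fun r => pt_t (u r)) s 1 /\
    is_derive (fun r => pt_x (u r)) s (pt_p (u s)) /\
    is_derive (fun r => pt_p (u r)) s (vp G F lam (pt_t (u s)) (pt_x (u s)) (pt_p (u s))).

(* Closedness and boundary relative to the ambient space R x Omega. *)
Definition rel_closed (E : pt -> Prop) : Prop :=
  (forall z, E z -> inD z) /\
  (forall z, inD z -> (forall r, 0 < r -> exists w, E w /\ dist3 w z < r) -> E z).

Definition rel_boundary (E : pt -> Prop) (z : pt) : Prop :=
  inD z /\
  forall r, 0 < r ->
    (exists w, E w /\ dist3 w z < r) /\ (exists w, inD w /\ ~ E w /\ dist3 w z < r).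

(* By uniqueness of solutions, "phi_s(z) defined and in E on (-eps,eps)" means
   exactly: there is a solution u on (-eps,eps) with u 0 = z and u s in E. *)
Definition bound_set (G : R) (F : R -> R) (lam : R) (E : pt -> Prop) : Prop :=
  rel_closed E /\
  forall eps, 0 < eps ->
    ~ exists z u, rel_boundary E z /\ is_solution G F lam eps u /\ u 0 = z /\
                  (forall s, -eps < s < eps -> E (u s)).

Definition Gamma_set (a : R) (x p : R) : Prop := Rabs x <= a.
Definition Delta_set (b : R) (x p : R) : Prop := Rabs x < 1 /\ b * Rabs x + Rabs p <= b.

Definition cyl (S : R -> R -> Prop) (z : pt) : Prop := S (pt_x z) (pt_p z).

(* At a point of the edge b|x| + |p| = b of Delta_b, the functional
   g = b sgn(x) x + sgn(p) p is <= b on Delta_b and equals b, so a trajectory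
   staying in Delta_b on (-eps, eps) makes g maximal at time 0 and g'(0) = 0.
   But sgn(x) sgn(p) g'(0) = b^2 (1-|x|)/(1+|x|) + G sqrt(1-x^2) |x|
   - sgn(x) lam (1-x^2) F(t), whose first term is at least b (1-a)/2 and beats
   the bound M of the continuous periodic forcing once b = 1 + 2M/(1-a).
   Every other boundary point of Gamma_a /\ Delta_b has |x| = a and is excluded
   by the hypothesis on Gamma_a. *)

From Stdlib Require Import Reals ZArith Lra Lia.
From Coquelicot Require Import Coquelicot.
Open Scope R_scope.

Section Periodic.

Variables (T : R) (F : R -> R).
Hypothesis T_pos : 0 < T.
Hypothesis F_periodic : forall t, F (t + T) = F t.

Lemma periodic_shift_nat (n : nat) (t : R) : F (t + INR n * T) = F t.
Proof.
  induction n as [|n IHn].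
  - f_equal; simpl; ring.
  - rewrite S_INR, <- IHn, <- (F_periodic (t + INR n * T)). f_equal; ring.
Qed.

Lemma periodic_shift_Z (k : Z) (t : R) : F (t + IZR k * T) = F t.
Proof.
  destruct (Z.le_ge_cases 0 k) as [Hk | Hk].
  - rewrite <- (Z2Nat.id k Hk), <- INR_IZR_INZ. apply periodic_shift_nat.
  - rewrite <- (Z.opp_involutive k), <- (Z2Nat.id (- k)) by lia.
    rewrite opp_IZR, <- INR_IZR_INZ.
    rewrite <- (periodic_shift_nat (Z.to_nat (- k)) (t + - INR (Z.to_nat (- k)) * T)).
    f_equal; ring.
Qed.

Lemma periodic_reduce (t : R) : exists s, 0 <= s <= T /\ F s = F t.
Proof.
  destruct (archimed (t / T)) as [Hup Hup1].
  exists (t + IZR (1 - up (t / T)) * T). split; [|apply periodic_shift_Z].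
  rewrite minus_IZR.
  assert (Ht : t / T * T = t) by (field; lra).
  split; nra.
Qed.

Lemma continuous_periodic_bounded :
  (forall t, continuous F t) -> exists M, 0 <= M /\ forall t, Rabs (F t) <= M.
Proof.
  intros F_cont.
  assert (Habs_cont : forall c, 0 <= c <= T -> continuity_pt (fun t => Rabs (F t)) c).
  { intros c _. apply (continuity_pt_comp F Rabs c).
    - apply continuity_pt_filterlim, F_cont.
    - apply Rcontinuity_abs. }
  destruct (continuity_ab_maj _ 0 T (Rlt_le _ _ T_pos) Habs_cont) as [tM [HtM _]].
  exists (Rabs (F tM)). split; [apply Rabs_pos|].
  intros t. destruct (periodic_reduce t) as [s [Hs <-]]. now apply HtM.
Qed.

End Periodic.

Lemma is_derive_local_max (f : R -> R) (a b c l : R) :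
  a < c < b -> (forall s, a < s < b -> f s <= f c) -> is_derive f c l -> l = 0.
Proof.
  intros Hc Hmax Hd. apply is_derive_Reals in Hd.
  change l with (derive_pt f c (exist _ l Hd)).
  apply (deriv_maximum f a b c); try lra.
  intros s Hs1 Hs2. now apply Hmax.
Qed.

Lemma dist3_refl (z : pt) : dist3 z z = 0.
Proof.
  unfold dist3, Rmax. rewrite !Rminus_diag, Rabs_R0. now repeat destruct Rle_dec.
Qed.

Lemma Rabs_x_dist3 (z w : pt) : Rabs (Rabs (pt_x w) - Rabs (pt_x z)) <= dist3 w z.
Proof.
  eapply Rle_trans; [apply Rabs_triang_inv2|].
  unfold dist3. eapply Rle_trans; [|apply Rmax_r]. apply Rmax_l.
Qed.

Lemma Rabs_p_dist3 (z w : pt) : Rabs (Rabs (pt_p w) - Rabs (pt_p z)) <= dist3 w z.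
Proof.
  eapply Rle_trans; [apply Rabs_triang_inv2|].
  unfold dist3. eapply Rle_trans; [|apply Rmax_r]. apply Rmax_r.
Qed.

Lemma Delta_gauge_dist3 (b : R) (z w : pt) : 0 <= b ->
  Rabs ((b * Rabs (pt_x w) + Rabs (pt_p w)) - (b * Rabs (pt_x z) + Rabs (pt_p z)))
    <= (b + 1) * dist3 w z.
Proof.
  intros Hb. apply Rabs_le_between'.
  pose proof (proj1 (Rabs_le_between' _ _ _) (Rabs_x_dist3 z w)).
  pose proof (proj1 (Rabs_le_between' _ _ _) (Rabs_p_dist3 z w)).
  split; nra.
Qed.

Lemma rel_closed_and (E1 E2 : pt -> Prop) :
  rel_closed E1 -> rel_closed E2 -> rel_closed (fun z => E1 z /\ E2 z).
Proof.
  intros [HD1 Hcl1] [_ Hcl2]. split.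
  - intros z [Hz _]. now apply HD1.
  - intros z Hz Happrox. split.
    + apply Hcl1; [exact Hz|]. intros r Hr.
      destruct (Happrox r Hr) as [w [[Hw _] Hd]]. now exists w.
    + apply Hcl2; [exact Hz|]. intros r Hr.
      destruct (Happrox r Hr) as [w [[_ Hw] Hd]]. now exists w.
Qed.

Lemma rel_closed_Delta (b : R) : 0 < b -> rel_closed (cyl (Delta_set b)).
Proof.
  intros Hb. split.
  - intros z [Hx _]. apply Rabs_def2 in Hx. unfold inD. lra.
  - intros z Hz Happrox. split; [apply Rabs_def1; unfold inD in Hz; lra|].
    apply Rle_plus_epsilon. intros r Hr.
    destruct (Happrox (r / (b + 1))) as [w [[_ Hw] Hd]]; [apply Rdiv_lt_0_compat; lra|].
    pose proof (proj1 (Rabs_le_between' _ _ _) (Delta_gauge_dist3 b z w (Rlt_le _ _ Hb))).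
    assert ((b + 1) * (r / (b + 1)) = r) by (field; lra).
    nra.
Qed.

Lemma not_rel_boundary_of_nbhd (E : pt -> Prop) (z : pt) (r : R) :
  0 < r -> (forall w, inD w -> dist3 w z < r -> E w) -> ~ rel_boundary E z.
Proof.
  intros Hr Hnbhd [_ Hbd]. destruct (Hbd r Hr) as [_ [w [Hw [HEw Hd]]]].
  now apply HEw, Hnbhd.
Qed.

Lemma rel_boundary_Gamma (a : R) (z : pt) :
  0 < a < 1 -> inD z -> Rabs (pt_x z) = a -> rel_boundary (cyl (Gamma_set a)) z.
Proof.
  intros Ha Hz Hxa. split; [exact Hz|]. intros r Hr. split.
  - exists z. unfold cyl, Gamma_set. rewrite dist3_refl. lra.
  - set (d := Rmin (r / 2) ((1 - a) / 2)).
    assert (Hd1 : d <= r / 2) by apply Rmin_l.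
    assert (Hd2 : d <= (1 - a) / 2) by apply Rmin_r.
    assert (Hd : 0 < d) by (apply Rmin_pos; lra).
    destruct z as [[t x] p]. unfold inD, cyl, Gamma_set, dist3, pt_t, pt_x, pt_p in *; simpl in *.
    exists (t, x * (1 + d), p); simpl.
    assert (Hout : Rabs (x * (1 + d)) = a * (1 + d))
      by (rewrite Rabs_mult, Hxa, Rabs_right; lra).
    assert (Hshift : Rabs (x * (1 + d) - x) = a * d)
      by (replace (x * (1 + d) - x) with (x * d) by ring;
          rewrite Rabs_mult, Hxa, Rabs_right; lra).
    rewrite Hout, Hshift, !Rminus_diag, Rabs_R0.
    assert (Hin : Rabs (x * (1 + d)) < 1) by (rewrite Hout; nra).
    apply Rabs_def2 in Hin.
    split; [lra|].
    split; [nra|].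
    repeat apply Rmax_lub_lt; nra.
Qed.

Lemma Gamma_Delta_boundary_cases (a b : R) (z : pt) : 0 < b ->
  rel_boundary (cyl (fun x p => Gamma_set a x p /\ Delta_set b x p)) z ->
  cyl (fun x p => Gamma_set a x p /\ Delta_set b x p) z ->
  Rabs (pt_x z) = a \/ b * Rabs (pt_x z) + Rabs (pt_p z) = b.
Proof.
  intros Hb Hbd [Hxa [_ Hedge]].
  destruct (Rle_lt_or_eq_dec _ _ Hxa) as [Hxa' | ->]; [|now left].
  destruct (Rle_lt_or_eq_dec _ _ Hedge) as [Hedge' | ->]; [|now right].
  exfalso.
  set (gap := b - (b * Rabs (pt_x z) + Rabs (pt_p z))).
  set (r := Rmin (a - Rabs (pt_x z)) (gap / (b + 1))).
  assert (Hr1 : r <= a - Rabs (pt_x z)) by apply Rmin_l.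
  assert (Hr2 : (b + 1) * r <= gap).
  { replace gap with ((b + 1) * (gap / (b + 1))) by (field; lra).
    apply Rmult_le_compat_l; [lra | apply Rmin_r]. }
  refine (not_rel_boundary_of_nbhd _ z r _ _ Hbd).
  - apply Rmin_pos; [lra | apply Rdiv_lt_0_compat; unfold gap; lra].
  - intros w Hw Hd.
    pose proof (proj1 (Rabs_le_between' _ _ _) (Rabs_x_dist3 z w)).
    pose proof (proj1 (Rabs_le_between' _ _ _) (Delta_gauge_dist3 b z w (Rlt_le _ _ Hb))).
    split; [unfold Gamma_set; lra|].
    split; [apply Rabs_def1; unfold inD in Hw; lra|].
    unfold gap in Hr2. nra.
Qed.

Lemma Rabs_sign (y : R) : exists e, (e = 1 \/ e = -1) /\ e * y = Rabs y.
Proof.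
  destruct (Rle_dec 0 y) as [Hy | Hy].
  - exists 1. rewrite Rabs_right; lra.
  - exists (-1). rewrite Rabs_left; lra.
Qed.

Lemma Rmult_sign_le_Rabs (e y : R) : e = 1 \/ e = -1 -> e * y <= Rabs y.
Proof. intros [-> | ->]; unfold Rabs; destruct Rcase_abs; lra. Qed.

Lemma vp_Delta_edge_neq0 (G : R) (F : R -> R) (lam M a b t x p e1 e2 : R) :
  0 < G -> 0 <= lam <= 1 -> Rabs (F t) <= M -> 1 <= b -> M < b * (1 - a) / 2 ->
  Rabs x <= a -> a < 1 -> b * Rabs x + Rabs p = b ->
  (e1 = 1 \/ e1 = -1) -> e1 * x = Rabs x -> (e2 = 1 \/ e2 = -1) -> e2 * p = Rabs p ->
  b * e1 * p + e2 * vp G F lam t x p <> 0.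
Proof.
  intros HG Hlam HF Hb HbM Hxa Ha Hedge He1 Hx He2 Hp Hzero.
  set (X := Rabs x) in *. set (P := Rabs p) in *.
  assert (HX : 0 <= X) by apply Rabs_pos.
  assert (HP : P = b * (1 - X)) by lra.
  assert (Hx2 : x ^ 2 = X ^ 2) by (unfold X; now rewrite pow2_abs).
  assert (Hp2 : p ^ 2 = P ^ 2) by (unfold P; now rewrite pow2_abs).
  set (S := sqrt (1 - x ^ 2)).
  assert (HS : 0 <= S) by apply sqrt_pos.
  assert (Hnormalized : e1 * e2 * (b * e1 * p + e2 * vp G F lam t x p)
                 = b * P + (G * S - P ^ 2 / (1 - X ^ 2)) * X - e1 * lam * (1 - X ^ 2) * F t).
  { unfold vp. fold S. rewrite <- Hx2, <- Hp2, <- Hx, <- Hp.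
    transitivity (b * (e1 * e1) * (e2 * p)
                  + e2 * e2 * ((G * S - p ^ 2 / (1 - x ^ 2)) * (e1 * x) - e1 * lam * (1 - x ^ 2) * F t));
      [ring|].
    replace (e1 * e1) with 1 by (destruct He1 as [-> | ->]; ring).
    replace (e2 * e2) with 1 by (destruct He2 as [-> | ->]; ring). ring. }
  assert (Hdominant : b * P - P ^ 2 / (1 - X ^ 2) * X = b * b * (1 - X) / (1 + X)).
  { rewrite HP. field. split; nra. }
  assert (Hq : (1 - a) / 2 <= (1 - X) / (1 + X)).
  { apply Rmult_le_compat; try lra. apply Rinv_le_contravar; lra. }
  assert (Hdominant_lb : b * (1 - a) / 2 <= b * b * (1 - X) / (1 + X)).
  { replace (b * b * (1 - X) / (1 + X)) with (b * b * ((1 - X) / (1 + X))) by (field; lra).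
    apply Rle_trans with (b * ((1 - X) / (1 + X))); [nra|].
    apply Rmult_le_compat_r; nra. }
  assert (Hforcing : e1 * lam * (1 - X ^ 2) * F t <= M).
  { eapply Rle_trans; [apply Rle_abs|].
    rewrite !Rabs_mult, (Rabs_right (1 - X ^ 2)), (Rabs_right lam) by nra.
    assert (Rabs e1 = 1) by (destruct He1 as [-> | ->]; unfold Rabs; destruct Rcase_abs; lra).
    assert (0 <= Rabs (F t)) by apply Rabs_pos.
    assert (HX2 : 0 <= 1 - X ^ 2 <= 1) by (split; nra).
    assert (0 <= lam * (1 - X ^ 2) <= 1) by (split; nra).
    nra. }
  assert (HGS : 0 <= G * S * X) by (apply Rmult_le_pos; nra).
  rewrite Hzero, Rmult_0_r in Hnormalized. nra.
Qed.

Lemma solution_leaves_Delta_edge (G : R) (F : R -> R) (lam M a b eps : R) (u : R -> pt) :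
  0 < G -> 0 <= lam <= 1 -> (forall t, Rabs (F t) <= M) ->
  1 <= b -> M < b * (1 - a) / 2 -> a < 1 -> 0 < eps ->
  is_solution G F lam eps u ->
  Rabs (pt_x (u 0)) <= a ->
  b * Rabs (pt_x (u 0)) + Rabs (pt_p (u 0)) = b ->
  ~ (forall s, -eps < s < eps -> cyl (Delta_set b) (u s)).
Proof.
  intros HG Hlam HM Hb HbM Ha Heps Hsol Hxa Hedge Hin.
  destruct (Rabs_sign (pt_x (u 0))) as [e1 [He1 Hx]].
  destruct (Rabs_sign (pt_p (u 0))) as [e2 [He2 Hp]].
  set (g := fun s => b * e1 * pt_x (u s) + e2 * pt_p (u s)).
  destruct (Hsol 0) as [_ [_ [Hdx Hdp]]]; [lra|].
  assert (Hdg : is_derive g 0 (b * e1 * pt_p (u 0)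
                 + e2 * vp G F lam (pt_t (u 0)) (pt_x (u 0)) (pt_p (u 0)))).
  { apply (is_derive_plus (fun s => b * e1 * pt_x (u s)) (fun s => e2 * pt_p (u s)));
      now apply is_derive_scal. }
  refine (vp_Delta_edge_neq0 G F lam M a b _ _ _ e1 e2 HG Hlam (HM _) Hb HbM Hxa Ha Hedge
            He1 Hx He2 Hp (is_derive_local_max g (- eps) eps 0 _ _ _ Hdg)); [lra|].
  intros s Hs. destruct (Hin s Hs) as [_ HDs]. unfold g.
  pose proof (Rmult_sign_le_Rabs e1 (pt_x (u s)) He1).
  pose proof (Rmult_sign_le_Rabs e2 (pt_p (u s)) He2).
  assert (b * e1 * pt_x (u 0) + e2 * pt_p (u 0) = b) by (rewrite Rmult_assoc, Hx, Hp; lra).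
  nra.
Qed.

Theorem lemma3p2 (G T : R) (F : R -> R) (a : R) :
  0 < G -> 0 < T ->
  (forall t, continuous F t) ->
  (forall t, F (t + T) = F t) ->
  0 < a < 1 ->
  (forall lam, 0 <= lam <= 1 -> bound_set G F lam (cyl (Gamma_set a))) ->
  exists b, 0 < b /\
    forall lam, 0 <= lam <= 1 ->
      bound_set G F lam (cyl (fun x p => Gamma_set a x p /\ Delta_set b x p)).
Proof.
  intros HG HT Hcont Hper Ha HGamma.
  destruct (continuous_periodic_bounded T F HT Hper Hcont) as [M [HM0 HM]].
  set (b := 1 + 2 * M / (1 - a)).
  assert (Hb : 1 <= b).
  { assert (0 <= 2 * M / (1 - a)) by (apply Rdiv_le_0_compat; lra). unfold b. lra. }
  assert (HbM : M < b * (1 - a) / 2) by (unfold b; field_simplify; lra).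
  exists b. split; [lra|]. intros lam Hlam.
  destruct (HGamma lam Hlam) as [HGamma_closed HGamma_bound]. split.
  - apply rel_closed_and; [exact HGamma_closed | apply rel_closed_Delta; lra].
  - intros eps Heps [z [u [Hbd [Hsol [Hu0 Hin]]]]].
    assert (Hz : cyl (fun x p => Gamma_set a x p /\ Delta_set b x p) z)
      by (rewrite <- Hu0; apply Hin; lra).
    destruct (Gamma_Delta_boundary_cases a b z ltac:(lra) Hbd Hz) as [Hxa | Hedge].
    + apply (HGamma_bound eps Heps). exists z, u.
      split; [apply rel_boundary_Gamma; [lra | apply Hbd | exact Hxa]|].
      split; [exact Hsol|]. split; [exact Hu0|].
      intros s Hs. apply Hin, Hs.
    + subst z.
      apply (solution_leaves_Delta_edge G F lam M a b eps u HG Hlam HM Hb HbM (proj2 Ha) Heps Hsol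
               (proj1 Hz) Hedge).
      intros s Hs. apply Hin, Hs.
Qed.
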